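(* Let $X$ be a complete CAT(0) space and $f:X\to(-\infty,\infty]$ a convex, proper, lower semicontinuous function attaining its minimum. Let $\psi:[0,\infty)\to[0,\infty)$ be an increasing function vanishing only at $0$, and $(\gamma_n)$ a sequence in $(0,\infty)$ with $\sum_{n=0}^\infty\gamma_n^2=\infty$ having rate of divergence $\theta$. Let $b\in\mathbb{N}$, $p\in Argmin(f)$ and $C$ the closed ball of center $p$ and radius $b$. Suppose $f$ is uniformly convex on $C$ with modulus $\psi$. For $x\in C$ let $x_0:=x$ and $x_{n+1}:=J_{\gamma_n}x_n$. Then $p$ is the unique minimizer of $f$ in $C$ and $(x_n)$ converges strongly to $p$ with rate of convergence $$\Omega_{b,\theta,\psi}(k):=\theta\left(b^2\left(\left\lceil\frac{2b}{2\psi\left(\frac1{k+1}\right)}\right\rceil+1\right)^2\right)+1.$$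
   Context: A geodesic space $(X,d)$ is CAT(0) if for all $z\in X$, all geodesics $\gamma:[a,b]\to X$ and all $t\in[0,1]$, $d^2(z,\gamma((1-t)a+tb))\le(1-t)d^2(z,\gamma(a))+td^2(z,\gamma(b))-t(1-t)d^2(\gamma(a),\gamma(b))$; $(1-t)x+ty$ denotes the point at distance $t\,d(x,y)$ from $x$ on the unique geodesic from $x$ to $y$. $Argmin(f)$ is the set of minimizers of $f$. $J_\gamma(x):=\arg\min_{y\in X}\left[f(y)+\frac1{2\gamma}d^2(x,y)\right]$ (exists uniquely). $f$ is uniformly convex on $C$ with modulus $\psi$ if for all $x,y\in C$, $t\in[0,1]$: $f((1-t)x+ty)\le(1-t)f(x)+tf(y)-t(1-t)\psi(d(x,y))$. A rate of divergence for $\sum\gamma_n^2=\infty$ is $\theta:\mathbb{N}\to\mathbb{N}$ with $\sum_{n=0}^{\theta(K)}\gamma_n^2\ge K$ for all $K$. A rate of convergence of $a_n\to a$ is $\Phi$ with $d(a_n,a)\le\frac1{k+1}$ for all $k$ and $n\ge\Phi(k)$. *)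

From Stdlib Require Import Reals Lra ZArith.
From Coquelicot Require Import Coquelicot.
Open Scope R_scope.

Definition is_metric {X : Type} (d : X -> X -> R) : Prop :=
  (forall x y, 0 <= d x y) /\ (forall x y, d x y = 0 <-> x = y) /\
  (forall x y, d x y = d y x) /\ (forall x y z, d x z <= d x y + d y z).

Definition converges {X : Type} (d : X -> X -> R) (u : nat -> X) (l : X) : Prop :=
  forall eps, 0 < eps -> exists N, forall n, (N <= n)%nat -> d (u n) l < eps.

Definition cauchy {X : Type} (d : X -> X -> R) (u : nat -> X) : Prop :=
  forall eps, 0 < eps -> exists N, forall m n, (N <= m)%nat -> (N <= n)%nat ->
    d (u m) (u n) < eps.

Definition complete {X : Type} (d : X -> X -> R) : Prop :=
  forall u, cauchy d u -> exists l, converges d u l.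

Definition geodesic {X : Type} (d : X -> X -> R) (g : R -> X) (a b : R) : Prop :=
  a <= b /\ forall s t, a <= s <= b -> a <= t <= b -> d (g s) (g t) = Rabs (s - t).

Definition geodesic_space {X : Type} (d : X -> X -> R) : Prop :=
  forall x y, exists g, geodesic d g 0 (d x y) /\ g 0 = x /\ g (d x y) = y.

Definition CAT0 {X : Type} (d : X -> X -> R) : Prop :=
  is_metric d /\ geodesic_space d /\
  forall z (g : R -> X) a b t, geodesic d g a b -> 0 <= t <= 1 ->
    (d z (g ((1 - t) * a + t * b)))^2 <=
      (1 - t) * (d z (g a))^2 + t * (d z (g b))^2 - t * (1 - t) * (d (g a) (g b))^2.

(* z = (1-t)x + ty : the point at distance t d(x,y) from x on the (unique)
   geodesic from x to y *)
Definition cc {X : Type} (d : X -> X -> R) (x y : X) (t : R) (z : X) : Prop :=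
  exists g, geodesic d g 0 (d x y) /\ g 0 = x /\ g (d x y) = y /\ z = g (t * d x y).

(* f : X -> (-oo, +oo] *)
Definition no_minfty {X : Type} (f : X -> Rbar) : Prop := forall x, f x <> m_infty.

Definition proper_fun {X : Type} (f : X -> Rbar) : Prop :=
  no_minfty f /\ exists x, f x <> p_infty.

Definition convex_fun {X : Type} (d : X -> X -> R) (f : X -> Rbar) : Prop :=
  forall x y t z, 0 <= t <= 1 -> cc d x y t z ->
    Rbar_le (f z) (Rbar_plus (Rbar_mult (1 - t) (f x)) (Rbar_mult t (f y))).

Definition lsc {X : Type} (d : X -> X -> R) (f : X -> Rbar) : Prop :=
  forall (a : R) (u : nat -> X) x, (forall n, Rbar_le (f (u n)) a) ->
    converges d u x -> Rbar_le (f x) a.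

Definition is_argmin {X : Type} (f : X -> Rbar) (p : X) : Prop :=
  forall z, Rbar_le (f p) (f z).

Definition uniformly_convex_on {X : Type} (d : X -> X -> R) (f : X -> Rbar)
    (C : X -> Prop) (psi : R -> R) : Prop :=
  forall x y t z, C x -> C y -> 0 <= t <= 1 -> cc d x y t z ->
    Rbar_le (f z)
      (Rbar_minus (Rbar_plus (Rbar_mult (1 - t) (f x)) (Rbar_mult t (f y)))
                  (t * (1 - t) * psi (d x y))).

(* y = J_gam(x) : y minimizes  f(.) + d^2(x,.)/(2 gam) *)
Definition is_resolvent {X : Type} (d : X -> X -> R) (f : X -> Rbar) (gam : R)
    (x y : X) : Prop :=
  is_argmin (fun w => Rbar_plus (f w) (Finite ((d x w)^2 / (2 * gam)))) y.

Definition rate_of_divergence (gam : nat -> R) (theta : nat -> nat) : Prop :=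
  forall K : nat, sum_f_R0 (fun n => (gam n)^2) (theta K) >= INR K.

(* ceiling of a real, as a natural number (for nonnegative arguments) *)
Definition ceil_nat (r : R) : nat := Z.to_nat (- Int_part (- r)).

Definition Omega (b : nat) (theta : nat -> nat) (psi : R -> R) (k : nat) : nat :=
  let c : nat := ceil_nat ((2 * INR b) / (2 * psi (1 / (INR k + 1)))) in
  (theta (b ^ 2 * (c + 1) ^ 2) + 1)%nat.

(* Write y = J_gam x and let p minimize f.  Comparing y, by its minimality, with the
   points (1-t)y + tp, the CN inequality and the (uniform) convexity of f along [y, p]
   give, after letting t go to 0,
     2 gam psi(d(y,p)) + d(y,p)^2 <= d(x,p)^2 - d(x,y)^2   (psi = 0 for plain convexity).
   So the iterates are Fejer monotone with respect to p and stay in the ball, their squared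
   steps sum to at most b^2, and the triangle inequality turns the estimate into
   gam_n psi(d(x_(n+1),p)) <= d(x_n,x_(n+1)) b.  Since the sum of the gam_n^2 up to
   theta(b^2 (c+1)^2) is at least (c+1)^2 b^2, some step there has
   (c+1) d(x_n,x_(n+1)) <= gam_n, forcing psi(d(x_(n+1),p)) <= b/(c+1) < psi(1/(k+1))
   once c psi(1/(k+1)) >= b.
   Uniqueness comes from uniform convexity at the midpoint of two minimizers.
   Completeness and lower semicontinuity only serve to make J_gam well defined. *)

From Stdlib Require Import Reals Lra Lia ZArith.
From Coquelicot Require Import Coquelicot.
Open Scope R_scope.

Lemma Rle_of_forall_one_minus_mul_le (A B : R) :
  (forall t, 0 < t <= 1 -> (1 - t) * A <= B) -> A <= B.
Proof.
  intros H. destruct (Rle_dec A B) as [HAB | HAB]; [exact HAB |].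
  assert (HB : 0 <= B) by (specialize (H 1); lra).
  set (t := (A - B) / (2 * A)).
  assert (Ht : t * (2 * A) = A - B) by (unfold t; field; lra).
  assert (Htpos : 0 < t) by (unfold t; apply Rdiv_lt_0_compat; lra).
  specialize (H t ltac:(nra)). nra.
Qed.

Lemma ceil_nat_ge (r : R) : r <= INR (ceil_nat r).
Proof.
  unfold ceil_nat. destruct (base_Int_part (- r)) as [Hle _].
  destruct (Z_le_gt_dec 0 (- Int_part (- r))) as [Hz | Hz].
  - rewrite INR_IZR_INZ, Z2Nat.id, opp_IZR by exact Hz. lra.
  - apply Z.gt_lt, IZR_lt in Hz. rewrite opp_IZR in Hz.
    pose proof (pos_INR (Z.to_nat (- Int_part (- r)))). lra.
Qed.

Lemma sum_f_R0_le_telescope (a u : nat -> R) :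
  (forall n, a n <= u n - u (S n)) -> forall N, sum_f_R0 a N <= u 0%nat - u (S N).
Proof.
  intros Ha N. induction N as [| N IH]; simpl; [apply Ha |].
  specialize (Ha (S N)). lra.
Qed.

Lemma exists_le_of_sum_sq_le (a g : nat -> R) (N : nat) :
  (forall m, 0 <= g m) ->
  sum_f_R0 (fun m => a m ^ 2) N <= sum_f_R0 (fun m => g m ^ 2) N ->
  exists m, (m <= N)%nat /\ a m <= g m.
Proof.
  intros Hg. induction N as [| N IH]; cbn [sum_f_R0]; intros Hsum.
  - exists 0%nat. split; [lia |]. specialize (Hg 0%nat). nra.
  - destruct (Rle_dec (a (S N)) (g (S N))) as [Hle | Hgt].
    + exists (S N). split; [lia | exact Hle].
    + destruct IH as [m [Hm Ham]].
      { specialize (Hg (S N)). apply Rnot_le_lt in Hgt. nra. }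
      exists m. split; [lia | exact Ham].
Qed.

Section CAT0Space.

Variables (X : Type) (d : X -> X -> R).
Hypothesis HX : CAT0 d.

Lemma CAT0_dist_ge0 x y : 0 <= d x y.
Proof. apply (proj1 (proj1 HX)). Qed.

Lemma CAT0_dist_eq0 x y : d x y = 0 <-> x = y.
Proof. apply (proj1 (proj2 (proj1 HX))). Qed.

Lemma CAT0_dist_sym x y : d x y = d y x.
Proof. apply (proj1 (proj2 (proj2 (proj1 HX)))). Qed.

Lemma CAT0_dist_triangle x y z : d x z <= d x y + d y z.
Proof. apply (proj2 (proj2 (proj2 (proj1 HX)))). Qed.

Lemma exists_cc x y t : exists z, cc d x y t z.
Proof.
  destruct (proj1 (proj2 HX) x y) as [g [Hg [Hg0 Hg1]]].
  now exists (g (t * d x y)), g.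
Qed.

Lemma cc_sq_dist_le z x y t w :
  0 <= t <= 1 -> cc d x y t w ->
  d z w ^ 2 <= (1 - t) * d z x ^ 2 + t * d z y ^ 2 - t * (1 - t) * d x y ^ 2.
Proof.
  intros Ht [g [Hg [Hg0 [Hg1 ->]]]].
  pose proof (proj2 (proj2 HX) z g 0 (d x y) t Hg Ht) as HCN.
  replace ((1 - t) * 0 + t * d x y) with (t * d x y) in HCN by ring.
  now rewrite Hg0, Hg1 in HCN.
Qed.

Lemma cc_in_ball c r x y t w :
  0 <= t <= 1 -> cc d x y t w -> d c x <= r -> d c y <= r -> d c w <= r.
Proof.
  intros Ht Hw Hx Hy.
  pose proof (cc_sq_dist_le c x y t w Ht Hw) as HCN.
  pose proof (CAT0_dist_ge0 c w). pose proof (CAT0_dist_ge0 c x).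
  pose proof (CAT0_dist_ge0 c y). pose proof (CAT0_dist_ge0 x y).
  assert (d c x ^ 2 <= r ^ 2) by nra. assert (d c y ^ 2 <= r ^ 2) by nra.
  assert (0 <= t * (1 - t) * d x y ^ 2) by (apply Rmult_le_pos; nra).
  assert (d c w ^ 2 <= r ^ 2) by nra.
  nra.
Qed.

End CAT0Space.

Section Resolvent.

Variables (X : Type) (d : X -> X -> R) (f : X -> Rbar).
Hypothesis HX : CAT0 d.
Hypothesis Hf : proper_fun f.

Lemma argmin_finite p : is_argmin f p -> exists fp, f p = Finite fp.
Proof.
  intros Hp. destruct Hf as [Hnm [x0 Hx0]]. specialize (Hp x0).
  destruct (f p) as [fp | |] eqn:Efp; [now exists fp | | now destruct (Hnm p)].
  destruct (f x0); simpl in Hp; tauto.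
Qed.

Lemma resolvent_finite gam x y :
  is_resolvent d f gam x y -> exists fy, f y = Finite fy.
Proof.
  intros Hy. destruct Hf as [Hnm [x0 Hx0]]. specialize (Hy x0). simpl in Hy.
  destruct (f y) as [fy | |] eqn:Efy; [now exists fy | | now destruct (Hnm y)].
  destruct (f x0) eqn:Ex0; simpl in Hy; [tauto | tauto | now destruct (Hnm x0)].
Qed.

Lemma argmin_resolvent_finite gam x y p :
  is_argmin f p -> is_resolvent d f gam x y ->
  exists fp fy, f p = Finite fp /\ f y = Finite fy /\ fp <= fy.
Proof.
  intros Hp Hy.
  destruct (argmin_finite p Hp) as [fp Efp], (resolvent_finite gam x y Hy) as [fy Efy].
  exists fp, fy. repeat split; auto. specialize (Hp y). now rewrite Efp, Efy in Hp.
Qed.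

Lemma resolvent_descent gam x y p fy fp phi :
  0 < gam -> is_resolvent d f gam x y -> f y = Finite fy -> f p = Finite fp ->
  (forall t w, 0 < t <= 1 -> cc d y p t w ->
     Rbar_le (f w) (Finite ((1 - t) * fy + t * fp - t * (1 - t) * phi))) ->
  2 * gam * (phi + (fy - fp)) + d y p ^ 2 <= d x p ^ 2 - d x y ^ 2.
Proof.
  intros Hgam Hy Efy Efp Hphi.
  enough (2 * gam * phi + d y p ^ 2 <= d x p ^ 2 - d x y ^ 2 - 2 * gam * (fy - fp))
    by lra.
  apply Rle_of_forall_one_minus_mul_le. intros t Ht.
  destruct (exists_cc X d HX y p t) as [w Hw].
  pose proof (cc_sq_dist_le X d HX x y p t w ltac:(lra) Hw) as HCN.
  specialize (Hphi t w Ht Hw). specialize (Hy w). cbv beta in Hy. rewrite Efy in Hy.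
  destruct (f w) as [fw | |]; simpl in Hphi, Hy; try tauto.
  assert (Hyw : 2 * gam * fy + d x y ^ 2 <= 2 * gam * fw + d x w ^ 2).
  { replace (2 * gam * fy + d x y ^ 2) with (2 * gam * (fy + d x y ^ 2 / (2 * gam)))
      by (field; lra).
    replace (2 * gam * fw + d x w ^ 2) with (2 * gam * (fw + d x w ^ 2 / (2 * gam)))
      by (field; lra).
    apply Rmult_le_compat_l; lra. }
  assert (2 * gam * fw <= 2 * gam * ((1 - t) * fy + t * fp - t * (1 - t) * phi))
    by (apply Rmult_le_compat_l; lra).
  apply Rmult_le_reg_l with t; lra.
Qed.

Lemma resolvent_fejer gam x y p :
  convex_fun d f -> is_argmin f p -> 0 < gam -> is_resolvent d f gam x y ->
  d y p ^ 2 <= d x p ^ 2 - d x y ^ 2.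
Proof.
  intros Hcvx Hp Hgam Hy.
  destruct (argmin_resolvent_finite gam x y p Hp Hy) as [fp [fy [Efp [Efy Hle]]]].
  enough (2 * gam * (0 + (fy - fp)) + d y p ^ 2 <= d x p ^ 2 - d x y ^ 2).
  { assert (0 <= 2 * gam * (0 + (fy - fp))) by (apply Rmult_le_pos; lra). lra. }
  apply (resolvent_descent gam x y p fy fp 0 Hgam Hy Efy Efp).
  intros t w Ht Hw. specialize (Hcvx y p t w ltac:(lra) Hw).
  rewrite Efy, Efp in Hcvx. simpl in Hcvx. now rewrite Rmult_0_r, Rminus_0_r.
Qed.

Lemma resolvent_slope (C : X -> Prop) psi gam x y p :
  uniformly_convex_on d f C psi -> C y -> C p ->
  is_argmin f p -> 0 < gam -> is_resolvent d f gam x y ->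
  gam * psi (d y p) <= d x y * d y p.
Proof.
  intros Hucvx Cy Cp Hp Hgam Hy.
  destruct (argmin_resolvent_finite gam x y p Hp Hy) as [fp [fy [Efp [Efy Hle]]]].
  assert (Hdescent : 2 * gam * (psi (d y p) + (fy - fp)) + d y p ^ 2
                     <= d x p ^ 2 - d x y ^ 2).
  { apply (resolvent_descent gam x y p fy fp _ Hgam Hy Efy Efp).
    intros t w Ht Hw. specialize (Hucvx y p t w Cy Cp ltac:(lra) Hw).
    rewrite Efy, Efp in Hucvx. exact Hucvx. }
  pose proof (CAT0_dist_triangle X d HX x y p).
  pose proof (CAT0_dist_ge0 X d HX x y). pose proof (CAT0_dist_ge0 X d HX y p).
  assert (d x p ^ 2 <= (d x y + d y p) ^ 2)
    by (pose proof (CAT0_dist_ge0 X d HX x p); nra).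
  assert (0 <= 2 * gam * (fy - fp)) by (apply Rmult_le_pos; lra).
  nra.
Qed.

Lemma uniformly_convex_minimizer_unique (C : X -> Prop) psi p q fp :
  (forall x y t z, C x -> C y -> 0 <= t <= 1 -> cc d x y t z -> C z) ->
  uniformly_convex_on d f C psi -> (forall t, 0 < t -> 0 < psi t) ->
  f p = Finite fp -> C p -> C q ->
  (forall z, C z -> Rbar_le (f p) (f z)) -> (forall z, C z -> Rbar_le (f q) (f z)) ->
  q = p.
Proof.
  intros HC Hucvx Hpsi Efp Cp Cq Hpmin Hqmin.
  assert (Efq : f q = Finite fp) by (rewrite <- Efp; apply Rbar_le_antisym; auto).
  destruct (exists_cc X d HX p q (/ 2)) as [z Hz].
  assert (Cz : C z) by (apply (HC p q (/ 2) z); auto; lra).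
  specialize (Hucvx p q (/ 2) z Cp Cq ltac:(lra) Hz). specialize (Hpmin z Cz).
  rewrite Efp, Efq in Hucvx. rewrite Efp in Hpmin.
  destruct (f z) as [fz | |]; simpl in Hucvx, Hpmin; try tauto.
  destruct (Rle_lt_or_eq_dec _ _ (CAT0_dist_ge0 X d HX p q)) as [Hpos | Hzero].
  - specialize (Hpsi _ Hpos). lra.
  - symmetry. now apply (CAT0_dist_eq0 X d HX).
Qed.

End Resolvent.

Section FejerRate.

Variables (D step gam : nat -> R) (psi : R -> R) (theta : nat -> nat) (b : nat).
Hypothesis HD : forall n, 0 <= D n.
Hypothesis Hfejer : forall n, D (S n) ^ 2 <= D n ^ 2 - step n ^ 2.
Hypothesis HD0 : D 0%nat <= INR b.

Lemma fejer_decreasing m n : (m <= n)%nat -> D n <= D m.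
Proof.
  induction 1 as [| n _ IH]; [lra |].
  specialize (Hfejer n). pose proof (HD n). pose proof (HD (S n)).
  assert (D (S n) ^ 2 <= D n ^ 2) by nra. nra.
Qed.

Lemma fejer_bounded n : D n <= INR b.
Proof. pose proof (fejer_decreasing 0 n (Nat.le_0_l n)). lra. Qed.

Lemma fejer_sum_sq_steps_le N : sum_f_R0 (fun m => step m ^ 2) N <= INR b ^ 2.
Proof.
  assert (Hstep : forall n, step n ^ 2 <= D n ^ 2 - D (S n) ^ 2)
    by (intro n; specialize (Hfejer n); lra).
  pose proof (sum_f_R0_le_telescope _ _ Hstep N).
  pose proof (HD 0%nat). pose proof (pow2_ge_0 (D (S N))).
  assert (D 0%nat ^ 2 <= INR b ^ 2) by nra.
  lra.
Qed.

Hypothesis Hgam : forall n, 0 < gam n.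
Hypothesis Htheta : rate_of_divergence gam theta.

Lemma exists_short_step c :
  exists m, (m <= theta (b ^ 2 * (c + 1) ^ 2)%nat)%nat /\ (INR c + 1) * step m <= gam m.
Proof.
  apply exists_le_of_sum_sq_le; [intro m; apply Rlt_le, Hgam |].
  pose proof (Htheta (b ^ 2 * (c + 1) ^ 2)%nat) as HK.
  rewrite mult_INR, !pow_INR, plus_INR in HK. simpl (INR 1) in HK.
  set (N := theta _) in *.
  replace (sum_f_R0 (fun m => ((INR c + 1) * step m) ^ 2) N)
    with ((INR c + 1) ^ 2 * sum_f_R0 (fun m => step m ^ 2) N).
  2: { rewrite scal_sum. apply sum_eq. intros. ring. }
  pose proof (fejer_sum_sq_steps_le N).
  assert (0 <= (INR c + 1) ^ 2) by (apply pow2_ge_0).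
  assert ((INR c + 1) ^ 2 * sum_f_R0 (fun m => step m ^ 2) N
          <= (INR c + 1) ^ 2 * INR b ^ 2) by (apply Rmult_le_compat_l; assumption).
  lra.
Qed.

Hypothesis Hpsi_mono : forall s t, 0 <= s -> s <= t -> psi s <= psi t.
Hypothesis Hpsi_pos : forall t, 0 < t -> 0 < psi t.
Hypothesis Hslope : forall n, gam n * psi (D (S n)) <= step n * D (S n).

Lemma short_step_close c m eps :
  0 < eps -> INR b <= INR c * psi eps -> (INR c + 1) * step m <= gam m -> D (S m) < eps.
Proof.
  intros Heps Hc Hm.
  destruct (Rlt_le_dec (D (S m)) eps) as [Hlt | Hge]; [exact Hlt | exfalso].
  pose proof (Hpsi_mono eps (D (S m)) (Rlt_le _ _ Heps) Hge) as Hmono.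
  pose proof (Hpsi_pos eps Heps). pose proof (Hgam m).
  pose proof (pos_INR c). pose proof (HD (S m)).
  assert ((INR c + 1) * (gam m * psi (D (S m))) <= (INR c + 1) * (step m * D (S m)))
    by (apply Rmult_le_compat_l; [lra | apply Hslope]).
  assert ((INR c + 1) * step m * D (S m) <= gam m * D (S m))
    by (apply Rmult_le_compat_r; lra).
  assert (gam m * D (S m) <= gam m * (INR c * psi eps))
    by (apply Rmult_le_compat_l; [lra | pose proof (fejer_bounded (S m)); lra]).
  assert (gam m * psi eps <= gam m * psi (D (S m))) by (apply Rmult_le_compat_l; lra).
  nra.
Qed.

Lemma fejer_rate k n : (Omega b theta psi k <= n)%nat -> D n <= 1 / (INR k + 1).
Proof.
  unfold Omega. intros Hn.
  set (eps := 1 / (INR k + 1)) in *.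
  assert (Heps : 0 < eps)
    by (unfold eps; pose proof (pos_INR k); apply Rdiv_lt_0_compat; lra).
  set (c := ceil_nat _) in Hn.
  assert (Hc : INR b <= INR c * psi eps).
  { pose proof (ceil_nat_ge (2 * INR b / (2 * psi eps))) as Hceil.
    pose proof (Hpsi_pos eps Heps).
    replace (INR b) with (2 * INR b / (2 * psi eps) * psi eps) by (field; lra).
    apply Rmult_le_compat_r; [lra | exact Hceil]. }
  destruct (exists_short_step c) as [m [Hm Hstep]].
  pose proof (short_step_close c m eps Heps Hc Hstep).
  pose proof (fejer_decreasing (S m) n ltac:(lia)).
  lra.
Qed.

End FejerRate.

Theorem proposition5p4 (X : Type) (d : X -> X -> R) (f : X -> Rbar)
  (psi : R -> R) (gam : nat -> R) (theta : nat -> nat) (b : nat) (p : X)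
  (xs : nat -> X) :
  CAT0 d -> complete d ->
  convex_fun d f -> proper_fun f -> lsc d f ->
  (forall s t, 0 <= s -> s <= t -> psi s <= psi t) ->
  (forall t, 0 <= t -> 0 <= psi t) ->
  (forall t, 0 <= t -> (psi t = 0 <-> t = 0)) ->
  (forall n, 0 < gam n) ->
  rate_of_divergence gam theta ->
  is_argmin f p ->
  uniformly_convex_on d f (fun y => d p y <= INR b) psi ->
  d p (xs 0%nat) <= INR b ->
  (forall n, is_resolvent d f (gam n) (xs n) (xs (S n))) ->
  (forall q, d p q <= INR b ->
     (forall z, d p z <= INR b -> Rbar_le (f q) (f z)) -> q = p) /\
  (forall k n, (Omega b theta psi k <= n)%nat -> d (xs n) p <= 1 / (INR k + 1)).
Proof.
  intros HX _ Hcvx Hf _ Hpsi_mono Hpsi_nonneg Hpsi_zero Hgam Htheta Hp Hucvx Hx0 Hxs.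
  set (C := fun y => d p y <= INR b) in *.
  assert (Hpsi_pos : forall t, 0 < t -> 0 < psi t).
  { intros t Ht. destruct (Hpsi_nonneg t (Rlt_le _ _ Ht)) as [Hlt | Heq]; [exact Hlt |].
    symmetry in Heq. apply (Hpsi_zero t (Rlt_le _ _ Ht)) in Heq. lra. }
  assert (Cp : C p)
    by (unfold C; rewrite (proj2 (CAT0_dist_eq0 X d HX p p) eq_refl); apply pos_INR).
  split.
  - intros q Cq Hqmin.
    destruct (argmin_finite X f Hf p Hp) as [fp Efp].
    apply (uniformly_convex_minimizer_unique X d f HX C psi p q fp); auto.
    intros x y t z Cx Cy Ht Hz. exact (cc_in_ball X d HX p _ x y t z Ht Hz Cx Cy).
  - set (D := fun n => d (xs n) p). set (step := fun n => d (xs n) (xs (S n))).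
    assert (HD : forall n, 0 <= D n) by (intro n; apply (CAT0_dist_ge0 X d HX)).
    assert (Hfejer : forall n, D (S n) ^ 2 <= D n ^ 2 - step n ^ 2)
      by (intro n; apply (resolvent_fejer X d f HX Hf (gam n)); auto).
    assert (HD0 : D 0%nat <= INR b)
      by (unfold D; rewrite (CAT0_dist_sym X d HX); exact Hx0).
    assert (Hslope : forall n, gam n * psi (D (S n)) <= step n * D (S n)).
    { intro n. apply (resolvent_slope X d f HX Hf C); auto.
      unfold C. rewrite (CAT0_dist_sym X d HX).
      exact (fejer_bounded D step b HD Hfejer HD0 (S n)). }
    exact (fejer_rate D step gam psi theta b HD Hfejer HD0 Hgam Htheta
             Hpsi_mono Hpsi_pos Hslope).
Qed.
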